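(* For every fixed $p\in(0,1]$ and every integer $n\ge1$, $\gamma_n^*(p)\ge\gamma_{n+1}^*(p)$.
   Context: SP-UA model: $n$ candidates with distinct overall ranks $1,\dots,n$ ($1$ best) arrive in uniformly random order; the decision maker sees only each candidate's rank among those arrived so far and irrevocably decides (possibly randomly) to make an offer or pass; an offered candidate accepts independently with probability $p$ and then the process stops. A policy collects a candidate of rank $i$ if it makes her an offer and she accepts. $\gamma_n^*(p)=\sup_{\mathcal P}\min_{k\in[n]}\Pr(\mathcal P\text{ collects a candidate with rank}\le k)/(1-(1-p)^k)$, the supremum over policies for $n$ candidates. *)

From HB Require Import structures.
From mathcomp Require Import all_boot all_order all_algebra all_fingroup.
From mathcomp Require Import all_classical all_reals.
Set Implicit Arguments. Unset Strict Implicit. Unset Printing Implicit Defensive.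
Import Order.TTheory GRing.Theory Num.Theory.
Local Open Scope ring_scope.
Local Open Scope classical_set_scope.

(* Arrival order: a permutation s of 'I_n; s i is the overall rank (0 = best)
   of the candidate arriving at time i (times 0..n-1).  Uniform random order
   = uniform average over {perm 'I_n}. *)

Definition relrank (n : nat) (s : {perm 'I_n}) (i : 'I_n) : nat :=
  #|[set j : 'I_n | (j <= i)%N && (s j <= s i)%N]|.

Definition history (n : nat) (s : {perm 'I_n}) (i : 'I_n) : seq nat :=
  [seq relrank s j | j : 'I_n <- enum 'I_n & (j <= i)%N].

(* A (randomized) policy: at time t, having observed history h (and not having
   stopped yet), make an offer with probability q t h. *)
Definition policy (R : realType) := nat -> seq nat -> R.

Definition valid_policy (R : realType) (q : policy R) : Prop :=
  forall t h, 0 <= q t h <= 1.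

(* Probability (for the fixed arrival order s) that the policy reaches time i,
   makes an offer there and the offer is accepted: all earlier offers (if any)
   were rejected, acceptance being independent with probability p. *)
Definition collect_at (R : realType) (n : nat) (p : R) (q : policy R)
    (s : {perm 'I_n}) (i : 'I_n) : R :=
  p * q i (history s i) *
  \prod_(j : 'I_n | (j < i)%N) (1 - p * q j (history s j)).

(* Pr(policy collects a candidate with overall rank <= k) (ranks 1-based). *)
Definition collect_le (R : realType) (n : nat) (p : R) (q : policy R)
    (k : nat) : R :=
  (n`!%:R)^-1 *
  \sum_(s : {perm 'I_n}) \sum_(i : 'I_n | (s i < k)%N) collect_at p q s i.

Definition ratio_value (R : realType) (n : nat) (p : R) (q : policy R) : R :=
  inf [set r : R | exists2 k : nat, (0 < k <= n)%N &
                     r = collect_le n p q k / (1 - (1 - p) ^+ k)].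

Definition gamma_star (R : realType) (n : nat) (p : R) : R :=
  sup [set v : R | exists q : policy R, valid_policy q /\ v = ratio_value n p q].

From HB Require Import structures.
From mathcomp Require Import all_boot all_order all_algebra all_fingroup.
From mathcomp Require Import all_classical all_reals.
From mathcomp Require Import zify ring lra.
Import Order.TTheory GRing.Theory Num.Theory.
Set Implicit Arguments. Unset Strict Implicit. Unset Printing Implicit Defensive.

(* Given a policy q for n+1 candidates, a decision maker facing n candidates
   can imagine a phantom candidate, worse than everybody, arriving at a
   uniformly random time pos: the real arrival order then looks like a uniform
   order of n+1 candidates, and from the real history one can compute the
   history q would have seen.  Running q on it but never making the (possibly
   accepted) offer to the phantom can only raise the probability of collecting
   each real candidate.  Averaging over pos is realised by a single mixture
   policy whose collection probabilities are the average of those of its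
   components; since the phantom is worst, the ratios for k <= n can only
   increase, so gamma_(n+1) <= gamma_n. *)

Definition insert_worst n (pos : 'I_n.+1) (s : {perm 'I_n}) : {perm 'I_n.+1} :=
  lift_perm pos ord_max s.

(* [relrank] counts a classical set; this is its finset form. *)
Lemma relrank_finset n (s : {perm 'I_n}) i :
  relrank s i = #|[set j : 'I_n | (j <= i)%N && (s j <= s i)%N]%SET|.
Proof. by apply: eq_card => x; rewrite inE /in_mem /mem /= /in_set asboolb. Qed.

Lemma relrank_insert_worst_lift n (s : {perm 'I_n}) (pos : 'I_n.+1) (j : 'I_n) :
  relrank (insert_worst pos s) (lift pos j) = relrank s j.
Proof.
rewrite !relrank_finset.
set B := [set j' : 'I_n | (j' <= j)%N && (s j' <= s j)%N]%SET.
rewrite -(card_imset B (@lift_inj _ pos)); apply: eq_card => i; rewrite inE.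
case: (unliftP pos i) => [j'|] ->.
  rewrite mem_imset ?inE; last exact: lift_inj.
  by rewrite !lift_perm_lift !lift_max leq_bump2.
rewrite lift_perm_id lift_perm_lift lift_max /= [(n <= _)%N]leqNgt ltn_ord andbF.
by apply/esym/negP => /imsetP [x _] /eqP; rewrite (negbTE (neq_lift _ _)).
Qed.

Lemma relrank_insert_worst_pos n (s : {perm 'I_n}) (pos : 'I_n.+1) :
  relrank (insert_worst pos s) pos = pos.+1.
Proof.
rewrite relrank_finset /insert_worst lift_perm_id.
rewrite (_ : [set j | _]%SET = [set j : 'I_n.+1 | (j < pos.+1)%N]%SET); last first.
  by apply/setP => j; rewrite !inE /= leq_ord andbT ltnS.
rewrite -sum1_card (eq_bigl (fun j : 'I_n.+1 => (j < pos.+1)%N)) => [|j]; last by rewrite inE.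
by rewrite -(big_ord_widen _ (fun _ => 1%N) (ltn_ord pos)) sum1_card card_ord.
Qed.

Lemma historyE n (s : {perm 'I_n.+1}) (i : 'I_n.+1) :
  history s i = mkseq (fun k => relrank s (inord k)) i.+1.
Proof.
rewrite /history /mkseq.
rewrite (_ : [seq relrank s j | j : 'I_n.+1 <- enum 'I_n.+1 & (j <= i)%N] =
   map (fun k => relrank s (inord k))
       (map val [seq j : 'I_n.+1 <- enum 'I_n.+1 | (j <= i)%N])); last first.
  by rewrite -map_comp; apply: eq_map => j /=; rewrite inord_val.
congr map.
rewrite -(filter_map val (fun k => (k <= i)%N)) val_enum_ord.
by rewrite (filter_iota_leq 0 (ltn_ord i)).
Qed.

Lemma history_take n (s : {perm 'I_n.+1}) (i j : 'I_n.+1) : (i <= j)%N ->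
  history s i = take i.+1 (history s j).
Proof.
by move=> ij; rewrite !historyE /mkseq -map_take take_iota (minn_idPl _) // ltnS.
Qed.

(* The history seen at (real) time t with a phantom at time pos: its entries
   are those of h, with the phantom's relative rank pos.+1 inserted at pos. *)
Definition phantom_history (pos t : nat) (h : seq nat) : seq nat :=
  mkseq (fun i => if (i < pos)%N then nth 0%N h i
                  else if i == pos then pos.+1 else nth 0%N h i.-1) (bump pos t).+1.

Lemma inord_bump n (pos : 'I_n.+2) (k : nat) : (k <= n)%N ->
  (inord (bump pos k) : 'I_n.+2) = lift pos (inord k : 'I_n.+1).
Proof.
move=> kn; apply: val_inj => /=; rewrite inordK ?inordK //.
by rewrite /bump; case: (pos <= k)%N; rewrite /= ?add1n ?add0n ltnS // (leq_trans kn).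
Qed.

Lemma history_insert_worst n (s : {perm 'I_n.+1}) (pos : 'I_n.+2) (j : 'I_n.+1) :
  history (insert_worst pos s) (lift pos j) = phantom_history pos j (history s j).
Proof.
rewrite !historyE /phantom_history /= /mkseq.
apply/eq_in_map => i; rewrite mem_iota add0n => hi; move: hi; rewrite /bump => hi.
have hj : (j <= n)%N by rewrite -ltnS.
have hp : (pos <= n.+1)%N by rewrite -ltnS.
case: ltnP => hip.
  have ij : (i < j.+1)%N by move: hi; case: leqP => ? ?; lia.
  rewrite (nth_map 0%N) ?size_iota ?nth_iota //.
  rewrite {1}(_ : i = bump pos i); last by rewrite /bump leqNgt hip.
  by rewrite inord_bump ?relrank_insert_worst_lift //; lia.
case: eqP => [->|hne]; first by rewrite inord_val relrank_insert_worst_pos.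
have ij : (i.-1 < j.+1)%N by move: hi; case: leqP => ? ?; lia.
rewrite (nth_map 0%N) ?size_iota ?nth_iota //.
rewrite {1}(_ : i = bump pos i.-1); last by rewrite /bump; case: leqP => ?; lia.
by rewrite inord_bump ?relrank_insert_worst_lift //; lia.
Qed.

Local Open Scope ring_scope.

Lemma sum_perm_lift_perm {V : nmodType} n (k : 'I_n.+1) (F : {perm 'I_n.+1} -> V) :
  \sum_(s : {perm 'I_n.+1}) F s =
  \sum_(pos : 'I_n.+1) \sum_(t : {perm 'I_n}) F (lift_perm pos k t).
Proof.
rewrite (partition_big (fun s : {perm 'I_n.+1} => (s^-1)%g k) predT) //=.
apply: eq_bigr => i0 _.
rewrite (eq_bigl (fun s : {perm 'I_n.+1} => s i0 == k)); last first.
  by move=> s; apply/eqP/eqP => [<-|<-]; rewrite ?permKV ?permK.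
rewrite (reindex (lift_perm i0 k)); last first.
  pose ulsf i (s : 'S_n.+1) j := odflt j (unlift (s i) (s (lift i j))).
  have ulsfK i (s : 'S_n.+1) j : lift (s i) (ulsf i s j) = s (lift i j).
    rewrite /ulsf; have := neq_lift i j.
    by rewrite -(can_eq (permK s)) => /unlift_some[] ? ? ->.
  have inj_ulsf : injective (ulsf i0 _).
    move=> s; apply: can_inj (ulsf (s i0) s^-1%g) _ => j.
    by rewrite {1}/ulsf ulsfK !permK liftK.
  exists (fun s => perm (inj_ulsf s)) => [s _ | s].
    by apply/permP => j; rewrite permE /ulsf lift_perm_lift lift_perm_id liftK.
  move/(s _ =P _) => si0; apply/permP => j.
  case: (unliftP i0 j) => [j'|] ->; rewrite ?lift_perm_id //.
  by rewrite lift_perm_lift -si0 permE ulsfK.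
by apply: eq_bigl => s; rewrite lift_perm_id eqxx.
Qed.

Lemma one_sub_mul_itv (R : realFieldType) (p x : R) :
  0 <= p <= 1 -> 0 <= x <= 1 -> 0 <= 1 - p * x <= 1.
Proof. by move=> /andP[? ?] /andP[? ?]; apply/andP; split; nra. Qed.

Definition phantom_policy (R : realType) (q : policy R) (pos : nat) : policy R :=
  fun t h => q (bump pos t) (phantom_history pos t h).

Lemma phantom_policy_valid (R : realType) (q : policy R) pos :
  valid_policy q -> valid_policy (phantom_policy q pos).
Proof. by move=> hq t h; apply: hq. Qed.

Lemma collect_at_insert_worst (R : realType) (p : R) (q : policy R) n
    (s : {perm 'I_n.+1}) (pos : 'I_n.+2) (j : 'I_n.+1) :
  0 <= p <= 1 -> valid_policy q ->
  collect_at p q (insert_worst pos s) (lift pos j) <=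
  collect_at p (phantom_policy q pos) s j.
Proof.
move=> hp hq; rewrite /collect_at history_insert_worst.
have [p0 _] := andP hp.
have [q0 _] := andP (hq (bump pos j) (phantom_history pos j (history s j))).
apply: ler_wpM2l; first exact: mulr_ge0.
(* The only extra rejection factor is the one of the offer to the phantom. *)
rewrite big_mkcond [X in _ <= X]big_mkcond (bigD1_ord pos) //=.
rewrite [X in _ * X](_ : _ = \prod_(i < n.+1) (if (i < j)%N then
    1 - p * phantom_policy q pos i (history s i) else 1)); last first.
  apply: eq_bigr => k _; rewrite !ltnNge !leq_bump2.
  by case: ifP => // _; rewrite history_insert_worst.
apply: ler_piMl.
  apply: prodr_ge0 => k _; case: ifP => // _.
  by case/andP: (one_sub_mul_itv hp (phantom_policy_valid pos hq k (history s k))).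
by case: ifP => // _;
  case/andP: (one_sub_mul_itv hp (hq pos (history (insert_worst pos s) pos))).
Qed.

Lemma collect_rank_lt_insert_worst (R : realType) (p : R) (q : policy R) n k
    (s : {perm 'I_n.+1}) (pos : 'I_n.+2) :
  0 <= p <= 1 -> valid_policy q -> (k <= n.+1)%N ->
  \sum_(i : 'I_n.+2 | (insert_worst pos s i < k)%N) collect_at p q (insert_worst pos s) i
  <= \sum_(j : 'I_n.+1 | (s j < k)%N) collect_at p (phantom_policy q pos) s j.
Proof.
move=> hp hq hk.
rewrite big_mkcond (bigD1_ord pos) //= lift_perm_id /= ltnNge hk /= add0r.
rewrite [X in _ <= X]big_mkcond /=; apply: ler_sum => j _.
rewrite lift_perm_lift lift_max; case: ifP => // _; exact: collect_at_insert_worst.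
Qed.

Lemma collect_le_phantom_avg (R : realType) (p : R) (q : policy R) n k :
  0 <= p <= 1 -> valid_policy q -> (k <= n.+1)%N ->
  collect_le n.+2 p q k <=
  (n.+2)%:R^-1 * \sum_(pos : 'I_n.+2) collect_le n.+1 p (phantom_policy q pos) k.
Proof.
move=> hp hq hk; rewrite /collect_le (sum_perm_lift_perm ord_max).
apply: (@le_trans _ _ ((n.+2)`!%:R^-1 * \sum_(pos : 'I_n.+2) \sum_(t : {perm 'I_n.+1})
    \sum_(j : 'I_n.+1 | (t j < k)%N) collect_at p (phantom_policy q pos) t j)).
  apply: ler_wpM2l; first by rewrite invr_ge0 ler0n.
  by apply: ler_sum => pos _; apply: ler_sum => t _; exact: collect_rank_lt_insert_worst.
rewrite big_distrr [X in _ <= X]big_distrr /=; apply: ler_sum => pos _.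
by rewrite mulrA factS natrM invfM.
Qed.

(* Picking one of K policies uniformly at random beforehand is simulated by
   the single policy [mixture]: at time t it offers with the posterior
   probability that the chosen policy offers, given that no offer has been
   accepted so far. *)

Definition survival (R : realType) (p : R) (q : policy R) t (h : seq nat) : R :=
  \prod_(0 <= i < t) (1 - p * q i (take i.+1 h)).

Definition avg_survival (R : realType) (p : R) K (Q : 'I_K -> policy R) t h : R :=
  K%:R^-1 * \sum_(a : 'I_K) survival p (Q a) t h.

Definition avg_offer (R : realType) (p : R) K (Q : 'I_K -> policy R) t h : R :=
  K%:R^-1 * \sum_(a : 'I_K) survival p (Q a) t h * Q a t h.

Definition mixture (R : realType) (p : R) K (Q : 'I_K -> policy R) : policy R :=
  fun t h => if avg_survival p Q t h == 0 then 0
             else avg_offer p Q t h / avg_survival p Q t h.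

Lemma survival_take (R : realType) (p : R) (q : policy R) t h j : (t <= j)%N ->
  survival p q t (take j h) = survival p q t h.
Proof.
by move=> tj; apply: eq_big_nat => i /andP[_ it]; rewrite take_takel // (leq_trans it tj).
Qed.

Lemma survival_history (R : realType) (p : R) (q : policy R) n
    (s : {perm 'I_n.+1}) (j : 'I_n.+1) :
  \prod_(i : 'I_n.+1 | (i < j)%N) (1 - p * q i (history s i)) =
  survival p q j (history s j).
Proof.
rewrite /survival big_mkord.
rewrite (big_ord_widen n.+1 (fun i => 1 - p * q i (take i.+1 (history s j))) (ltnW (ltn_ord j))).
by apply: eq_bigr => i hi; rewrite -history_take // ltnW.
Qed.

Section Mixture.
Variables (R : realType) (p : R) (K : nat) (Q : 'I_K -> policy R).
Hypothesis hp : 0 <= p <= 1.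
Hypothesis hQ : forall a, valid_policy (Q a).

Lemma survival_ge0 a t h : 0 <= survival p (Q a) t h.
Proof. by apply: prodr_ge0 => i _; case/andP: (one_sub_mul_itv hp (hQ a i (take i.+1 h))). Qed.

Lemma avg_survival_take t h j : (t <= j)%N ->
  avg_survival p Q t (take j h) = avg_survival p Q t h.
Proof. by move=> tj; congr (_ * _); apply: eq_bigr => a _; rewrite survival_take. Qed.

Lemma avg_offer_itv t h : 0 <= avg_offer p Q t h <= avg_survival p Q t h.
Proof.
have k0 : 0 <= K%:R^-1 :> R by rewrite invr_ge0 ler0n.
apply/andP; split.
  apply: mulr_ge0 => //; apply: sumr_ge0 => a _.
  by apply: mulr_ge0; [exact: survival_ge0 | case/andP: (hQ a t h)].
apply: ler_wpM2l => //; apply: ler_sum => a _.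
by apply: ler_piMr; [exact: survival_ge0 | case/andP: (hQ a t h)].
Qed.

Lemma avg_offer_eq0 t h : avg_survival p Q t h = 0 -> avg_offer p Q t h = 0.
Proof. by move=> D0; have := avg_offer_itv t h; rewrite D0 -eq_le => /eqP. Qed.

Lemma mixture_valid : valid_policy (mixture p Q).
Proof.
move=> t h; rewrite /mixture; case: eqP => [_|D0]; first by rewrite lexx ler01.
have /andP[N0 ND] := avg_offer_itv t h.
have D_gt0 : 0 < avg_survival p Q t h by rewrite lt_def (le_trans N0 ND) andbT; apply/eqP.
by rewrite divr_ge0 ?(ltW D_gt0) //= ler_pdivrMr // mul1r.
Qed.

Lemma mixture_offer t h :
  mixture p Q t h * avg_survival p Q t h = avg_offer p Q t h.
Proof.
rewrite /mixture; case: eqP => [D0|D0]; first by rewrite avg_offer_eq0 // mul0r.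
by rewrite mulfVK //; apply/eqP.
Qed.

Hypothesis hK : (0 < K)%N.

Lemma avg_survival0 h : avg_survival p Q 0 h = 1.
Proof.
rewrite /avg_survival (eq_bigr (fun _ => 1)) => [|a _]; last by rewrite /survival big_geq.
by rewrite sumr_const card_ord -[X in _ * X]mulr_natl mulr1 mulVf // pnatr_eq0 -lt0n.
Qed.

Lemma survival_mixture t h : survival p (mixture p Q) t h = avg_survival p Q t h.
Proof.
elim: t => [|t IH]; first by rewrite /survival big_geq // avg_survival0.
rewrite /survival big_nat_recr //= -/(survival _ _ t h) IH.
have -> : avg_survival p Q t h * (1 - p * mixture p Q t (take t.+1 h)) =
    avg_survival p Q t h - p * avg_offer p Q t (take t.+1 h).
  by rewrite -(avg_survival_take _ (leqnSn t)) -mixture_offer; ring.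
rewrite /avg_survival /avg_offer mulrCA -mulrBr; congr (_ * _).
rewrite big_distrr -sumrB; apply: eq_bigr => a _.
rewrite (survival_take _ _ _ (leqnSn t)) /survival big_nat_recr //=; ring.
Qed.

Lemma collect_at_mixture n (s : {perm 'I_n.+1}) (j : 'I_n.+1) :
  collect_at p (mixture p Q) s j = K%:R^-1 * \sum_(a : 'I_K) collect_at p (Q a) s j.
Proof.
rewrite /collect_at !survival_history survival_mixture -mulrA mixture_offer.
rewrite /avg_offer mulrCA big_distrr; congr (_ * _); apply: eq_bigr => a _.
by rewrite survival_history /=; ring.
Qed.

Lemma collect_le_mixture n k :
  collect_le n.+1 p (mixture p Q) k =
  K%:R^-1 * \sum_(a : 'I_K) collect_le n.+1 p (Q a) k.
Proof.
rewrite /collect_le.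
under eq_bigr do under eq_bigr do rewrite collect_at_mixture.
under eq_bigr do rewrite -big_distrr /=.
rewrite -big_distrr /= mulrCA -[in RHS]big_distrr /=; congr (_ * (_ * _)).
under eq_bigr do rewrite exchange_big /=.
by rewrite exchange_big.
Qed.

End Mixture.

Lemma ratio_den_gt0 (R : realFieldType) (p : R) k : 0 < p -> p <= 1 -> (0 < k)%N ->
  0 < 1 - (1 - p) ^+ k.
Proof. by move=> p0 p1 k0; rewrite subr_gt0 expr_lt1 //; lra. Qed.

Section CollectBounds.
Variables (R : realType) (p : R) (q : policy R) (n : nat).
Hypothesis hp : 0 <= p <= 1.
Hypothesis hq : valid_policy q.

Lemma collect_at_itv s (i : 'I_n) : 0 <= collect_at p q s i <= 1.
Proof.
have [p0 p1] := andP hp; have [q0 q1] := andP (hq i (history s i)).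
have /andP[P0 P1] : 0 <= \prod_(j : 'I_n | (j < i)%N) (1 - p * q j (history s j)) <= 1.
  apply/andP; split.
    by apply: prodr_ge0 => j _; case/andP: (one_sub_mul_itv hp (hq j (history s j))).
  by apply: prodr_ile1 => j _; exact: (one_sub_mul_itv hp (hq j (history s j))).
have pq1 : p * q i (history s i) <= 1 by nra.
rewrite /collect_at; apply/andP; split; [by rewrite !mulr_ge0 | nra].
Qed.

Lemma collect_le_ge0 k : 0 <= collect_le n p q k.
Proof.
rewrite /collect_le mulr_ge0 ?invr_ge0 ?ler0n //.
by apply: sumr_ge0 => s _; apply: sumr_ge0 => i _; case/andP: (collect_at_itv s i).
Qed.

Lemma collect_le_le_size k : collect_le n p q k <= n%:R.
Proof.
rewrite /collect_le.
apply: (@le_trans _ _ (n`!%:R^-1 * \sum_(s : {perm 'I_n}) n%:R)).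
  apply: ler_wpM2l; first by rewrite invr_ge0 ler0n.
  apply: ler_sum => s _.
  apply: (@le_trans _ _ (\sum_(i : 'I_n) 1)); last by rewrite sumr_const card_ord.
  rewrite big_mkcond /=; apply: ler_sum => i _.
  by case: ifP => _ //; case/andP: (collect_at_itv s i).
rewrite sumr_const card_Sn -(mulr_natl (n%:R : R) n`!) mulrA mulVf ?mul1r //.
by rewrite pnatr_eq0 -lt0n fact_gt0.
Qed.

End CollectBounds.

Lemma ratio_value_le (R : realType) (p : R) (q : policy R) n k :
  0 < p -> p <= 1 -> valid_policy q -> (0 < k <= n)%N ->
  ratio_value n p q <= collect_le n p q k / (1 - (1 - p) ^+ k).
Proof.
move=> p0 p1 hq hk; apply: ge_inf; last by exists k.
exists 0 => r [k' /andP[k0 _] ->].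
have hp : 0 <= p <= 1 by rewrite ltW.
by rewrite divr_ge0 ?collect_le_ge0 // ltW // ratio_den_gt0.
Qed.

Lemma ratio_value_ge (R : realType) (p : R) (q : policy R) n x : (0 < n)%N ->
  (forall k, (0 < k <= n)%N -> x <= collect_le n p q k / (1 - (1 - p) ^+ k)) ->
  x <= ratio_value n p q.
Proof.
move=> n0 hx; apply: lb_le_inf; last by move=> r [k hk ->]; exact: hx.
by exists (collect_le n p q 1 / (1 - (1 - p) ^+ 1)); exists 1%N.
Qed.

Lemma ratio_value_le_size (R : realType) (p : R) (q : policy R) n :
  0 < p -> p <= 1 -> valid_policy q -> (0 < n)%N -> ratio_value n p q <= n%:R / p.
Proof.
move=> p0 p1 hq n0; apply: le_trans (ratio_value_le p0 p1 hq (_ : (0 < 1 <= n)%N)) _.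
  by rewrite n0.
rewrite expr1 opprB addrC subrK; apply: ler_wpM2r; first by rewrite invr_ge0 ltW.
by rewrite collect_le_le_size // ltW.
Qed.

Theorem lemma1 (R : realType) (p : R) (n : nat) :
  0 < p -> p <= 1 -> (1 <= n)%N ->
  gamma_star (n.+1) p <= gamma_star n p.
Proof.
move=> p0 p1; case: n => [//|n] _.
have hp : 0 <= p <= 1 by rewrite ltW.
apply: ge_sup.
  exists (ratio_value n.+2 p (fun _ _ => 0)), (fun _ _ => 0); split => //.
  by move=> t h; rewrite lexx ler01.
move=> _ [q [hq ->]].
pose Q pos := phantom_policy q (pos : 'I_n.+2).
have hQ a : valid_policy (Q a) by exact: phantom_policy_valid.
apply: (@le_trans _ _ (ratio_value n.+1 p (mixture p Q))).
  apply: ratio_value_ge => // k /andP[k0 kn].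
  apply: le_trans (ratio_value_le p0 p1 hq (_ : (0 < k <= n.+2)%N)) _.
    by rewrite k0 (leq_trans kn).
  apply: ler_wpM2r; first by rewrite invr_ge0 ltW // ratio_den_gt0.
  by rewrite collect_le_mixture //; exact: collect_le_phantom_avg.
apply: ub_le_sup; last by exists (mixture p Q); split => //; exact: mixture_valid.
by exists (n.+1%:R / p) => _ [q' [hq' ->]]; exact: ratio_value_le_size.
Qed.
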